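(* There exists an absolute constant $C$ such that the following holds. Let $W$ be a non-negative integer-valued random variable with $EW=\lambda\in(0,\infty)$, let $Y\sim\mathrm{Poi}(\lambda)$, and for integers $k\ge0$ let $$\eta_k=\sup\Big\{\frac{P(W\ge r)}{P(Y\ge r)}: r \text{ integer},\ \lambda\le r\le k\Big\}$$ (with the supremum of the empty set equal to $0$). Then for every non-negative, non-decreasing function $g:\{0,1,2,\dots\}\to\mathbb R$ and every integer $k\ge0$, $$E\,g(W\wedge k)\le C(\eta_k+1)\,E\,g(Y\wedge k).$$
   Context: $a\wedge b=\min(a,b)$; $\mathrm{Poi}(\lambda)$ is the Poisson distribution with mean $\lambda$. *)

From Stdlib Require Import Reals Lra Lia Arith Factorial.
Open Scope R_scope.

(* A non-negative integer-valued random variable is represented by its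
   probability mass function p : nat -> R  (p n = P(W = n)). *)

Definition poi (lam : R) (n : nat) : R := exp (- lam) * lam ^ n / INR (fact n).

Fixpoint psum (p : nat -> R) (r : nat) : R :=
  match r with
  | O => 0
  | S r' => psum p r' + p r'
  end.

(* tail p r = P(W >= r) = 1 - P(W < r)  (for a probability pmf p) *)
Definition tail (p : nat -> R) (r : nat) : R := 1 - psum p r.

(* E g(W /\ k) = sum_{n<k} g(n) P(W = n) + g(k) P(W >= k) *)
Fixpoint gsum (p g : nat -> R) (k : nat) : R :=
  match k with
  | O => 0
  | S k' => gsum p g k' + g k' * p k'
  end.
Definition Etrunc (p g : nat -> R) (k : nat) : R := gsum p g k + g k * tail p k.

Definition eta_term (p : nat -> R) (lam : R) (r : nat) : R :=
  if Rle_dec lam (INR r) then tail p r / tail (poi lam) r else 0.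

(* eta p lam k = sup { P(W>=r)/P(Y>=r) : r integer, lam <= r <= k }, with sup of
   the empty set = 0.  All ratios are >= 0, so taking the max together with 0
   gives exactly this supremum (the set is finite). *)
Fixpoint eta (p : nat -> R) (lam : R) (k : nat) : R :=
  match k with
  | O => Rmax 0 (eta_term p lam 0)
  | S k' => Rmax (eta p lam k') (eta_term p lam (S k'))
  end.

(* The proof has three ingredients.
   1. Poisson median bound: for an integer r <= lam, P(Y >= r) >= 1/2.  The
      pmf grows "symmetrically" below lam: poi(i) <= poi(i + 2t + 1) whenever
      i + t + 1 <= lam, because poi(b)/poi(a) is a product of factors
      lam^2 / ((a+1) b) >= 1 (AM-GM).  Summing the pairs gives
      P(Y < r) <= P(r <= Y < 2r) <= P(Y >= r).
   2. Tail comparison: for r <= k, P(W >= r) <= 2 (eta_k + 1) P(Y >= r).  For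
      r >= lam this is the definition of eta_k; for r < lam it is step 1
      together with P(W >= r) <= 1.
   3. Summation by parts: E g(W /\ k) = g 0 + sum_{1 <= r <= k}
      (g r - g (r-1)) P(W >= r), so for non-decreasing g >= 0, a factor
      B >= 1 dominating the tails up to k dominates the truncated moments. *)

From Stdlib Require Import Reals Lra Lia Arith Factorial.
Open Scope R_scope.

Lemma poi_S lam n : poi lam (S n) = poi lam n * lam / INR (S n).
Proof.
  unfold poi. rewrite fact_simpl, mult_INR. change (lam ^ S n) with (lam * lam ^ n).
  assert (INR (fact n) <> 0) by (apply not_0_INR, fact_neq_0).
  assert (INR (S n) <> 0) by (apply not_0_INR; lia).
  field; auto.
Qed.

Lemma poi_pos lam n : 0 < lam -> 0 < poi lam n.
Proof.
  intros Hlam. unfold poi. apply Rdiv_lt_0_compat.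
  - apply Rmult_lt_0_compat; [apply exp_pos | apply pow_lt; exact Hlam].
  - apply lt_0_INR, lt_O_fact.
Qed.

Lemma psum_poi_exp_series lam n :
  psum (poi lam) (S n) = exp (- lam) * sum_f_R0 (fun i => / INR (fact i) * lam ^ i) n.
Proof.
  induction n as [|n IHn].
  - simpl. unfold poi. simpl. field.
  - change (psum (poi lam) (S (S n))) with (psum (poi lam) (S n) + poi lam (S n)).
    rewrite IHn, tech5. unfold poi, Rdiv. ring.
Qed.

(* P(Y < n) <= 1: the exponential series has non-negative terms and sum e^lam. *)
Lemma psum_poi_le_1 lam n : 0 <= lam -> psum (poi lam) n <= 1.
Proof.
  intros Hlam. destruct n as [|n]; [simpl; lra|].
  rewrite psum_poi_exp_series.
  assert (Hseries : sum_f_R0 (fun i => / INR (fact i) * lam ^ i) n <= exp lam).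
  { apply growing_ineq.
    - intro m. rewrite tech5.
      assert (0 <= / INR (fact (S m)) * lam ^ S m).
      { apply Rmult_le_pos; [|apply pow_le; exact Hlam].
        left. apply Rinv_0_lt_compat, lt_0_INR, lt_O_fact. }
      lra.
    - unfold exp. destruct (exist_exp lam) as [s Hs]. exact Hs. }
  assert (exp (- lam) * exp lam = 1)
    by (rewrite <- exp_plus, Rplus_opp_l; apply exp_0).
  pose proof (exp_pos (- lam)). nra.
Qed.

Lemma tail_poi_pos lam r : 0 < lam -> 0 < tail (poi lam) r.
Proof.
  intros Hlam. unfold tail.
  pose proof (psum_poi_le_1 lam (S r) ltac:(lra)) as Hle. simpl in Hle.
  pose proof (poi_pos lam r Hlam). lra.
Qed.

(* Reflection inequality: below lam the pmf at i is dominated by the pmf at the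
   point i + 2t + 1 mirrored about i + t + 1/2 <= lam. *)
Lemma poi_reflect lam : forall t i, INR (i + t + 1) <= lam ->
  poi lam i <= poi lam (i + 2 * t + 1).
Proof.
  induction t as [|t IHt]; intros i Hmid.
  - replace (i + 2 * 0 + 1)%nat with (S i) in * by lia.
    replace (i + 0 + 1)%nat with (S i) in Hmid by lia.
    rewrite poi_S.
    assert (0 < INR (S i)) by (apply lt_0_INR; lia).
    assert (0 < poi lam i) by (apply poi_pos; lra).
    apply (Rmult_le_reg_r (INR (S i))); [assumption|].
    unfold Rdiv. rewrite Rmult_assoc, Rmult_assoc, Rinv_l by lra. nra.
  - set (b := (S i + 2 * t + 1)%nat).
    assert (Hinner : poi lam (S i) <= poi lam b).
    { apply IHt. replace (S i + t + 1)%nat with (i + S t + 1)%nat by lia. exact Hmid. }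
    replace (i + 2 * S t + 1)%nat with (S b) by (unfold b; lia).
    rewrite poi_S in Hinner |- *.
    (* AM-GM: (i+1) (b+1) <= (i + t + 2)^2 <= lam^2. *)
    assert (Hamgm : INR (S i) * INR (S b) <= lam * lam).
    { unfold b in *. rewrite !S_INR, !plus_INR, mult_INR, !S_INR in *. simpl INR in *.
      pose proof (pos_INR t). pose proof (pos_INR i). nra. }
    assert (Hlam : 0 < lam)
      by (pose proof (pos_INR (i + S t)); rewrite plus_INR in Hmid; simpl in Hmid; lra).
    assert (0 < INR (S i)) by (apply lt_0_INR; lia).
    assert (0 < INR (S b)) by (apply lt_0_INR; lia).
    assert (0 < poi lam i) by (apply poi_pos; lra).
    assert (0 < poi lam b) by (apply poi_pos; lra).
    unfold Rdiv in *.
    assert (Hinner' : poi lam i * lam <= poi lam b * INR (S i)).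
    { replace (poi lam i * lam) with (poi lam i * lam * / INR (S i) * INR (S i))
        by (field; lra).
      apply Rmult_le_compat_r; lra. }
    apply (Rmult_le_reg_r (INR (S b))); [assumption|].
    rewrite Rmult_assoc, Rmult_assoc, Rinv_l by lra.
    apply (Rmult_le_reg_r lam); [assumption|]. nra.
Qed.

Lemma poi_window_reflect lam : forall t i, INR (i + t) <= lam ->
  psum (poi lam) (i + t) - psum (poi lam) i <=
  psum (poi lam) (i + 2 * t) - psum (poi lam) (i + t).
Proof.
  induction t as [|t IHt]; intros i Hmid.
  - replace (i + 2 * 0)%nat with i by lia. replace (i + 0)%nat with i by lia. lra.
  - assert (Hinner := IHt (S i) ltac:(replace (S i + t)%nat with (i + S t)%nat by lia; exact Hmid)).
    assert (Houter : poi lam i <= poi lam (S i + 2 * t)).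
    { replace (S i + 2 * t)%nat with (i + 2 * t + 1)%nat by lia.
      apply poi_reflect. replace (i + t + 1)%nat with (i + S t)%nat by lia. exact Hmid. }
    replace (i + S t)%nat with (S i + t)%nat by lia.
    replace (i + 2 * S t)%nat with (S (S i + 2 * t)) by lia.
    change (psum (poi lam) (S (S i + 2 * t)))
      with (psum (poi lam) (S i + 2 * t) + poi lam (S i + 2 * t)).
    change (psum (poi lam) (S i)) with (psum (poi lam) i + poi lam i) in Hinner.
    lra.
Qed.

Lemma tail_poi_half lam r : 0 < lam -> INR r <= lam -> 1 <= 2 * tail (poi lam) r.
Proof.
  intros Hlam Hr.
  pose proof (poi_window_reflect lam r 0 Hr) as Hwin.
  pose proof (psum_poi_le_1 lam (2 * r) ltac:(lra)).
  rewrite !Nat.add_0_l in Hwin. change (psum (poi lam) 0) with 0 in Hwin.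
  unfold tail. lra.
Qed.

Lemma psum_nonneg p n : (forall m, 0 <= p m) -> 0 <= psum p n.
Proof. intros Hp. induction n; simpl; [lra | pose proof (Hp n); lra]. Qed.

Lemma eta_nonneg p lam k : 0 <= eta p lam k.
Proof.
  induction k; simpl; [apply Rmax_l | eapply Rle_trans; [exact IHk | apply Rmax_l]].
Qed.

Lemma eta_term_le_eta p lam : forall k r, (r <= k)%nat -> eta_term p lam r <= eta p lam k.
Proof.
  induction k as [|k IHk]; intros r Hr.
  - replace r with 0%nat by lia. apply Rmax_r.
  - destruct (Nat.eq_dec r (S k)) as [->|Hne]; simpl.
    + apply Rmax_r.
    + eapply Rle_trans; [apply IHk; lia | apply Rmax_l].
Qed.

Lemma tail_le_eta p lam k r :
  (forall n, 0 <= p n) -> 0 < lam -> (r <= k)%nat ->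
  tail p r <= 2 * (eta p lam k + 1) * tail (poi lam) r.
Proof.
  intros Hp Hlam Hrk.
  pose proof (tail_poi_pos lam r Hlam).
  pose proof (eta_nonneg p lam k).
  destruct (Rle_dec lam (INR r)) as [Hge|Hlt].
  - pose proof (eta_term_le_eta p lam k r Hrk) as Hratio.
    unfold eta_term in Hratio. destruct (Rle_dec lam (INR r)); [|contradiction].
    assert (tail p r <= eta p lam k * tail (poi lam) r).
    { replace (tail p r) with (tail p r / tail (poi lam) r * tail (poi lam) r)
        by (field; lra).
      apply Rmult_le_compat_r; lra. }
    nra.
  - pose proof (tail_poi_half lam r Hlam ltac:(lra)).
    pose proof (psum_nonneg p r Hp). unfold tail at 1. nra.
Qed.

Lemma Etrunc_S q g k : Etrunc q g (S k) = Etrunc q g k + (g (S k) - g k) * tail q (S k).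
Proof. unfold Etrunc, tail. simpl. ring. Qed.

Lemma Etrunc_le_of_tail_le p q g B k :
  1 <= B -> (forall n, 0 <= g n) -> (forall m n, (m <= n)%nat -> g m <= g n) ->
  (forall r, (1 <= r <= k)%nat -> tail p r <= B * tail q r) ->
  Etrunc p g k <= B * Etrunc q g k.
Proof.
  intros HB Hg Hmon Htail. induction k as [|k IHk].
  - unfold Etrunc, tail. simpl. pose proof (Hg 0%nat). nra.
  - rewrite !Etrunc_S.
    pose proof (IHk (fun r Hr => Htail r ltac:(lia))).
    pose proof (Hmon k (S k) ltac:(lia)).
    pose proof (Htail (S k) ltac:(lia)).
    assert ((g (S k) - g k) * tail p (S k) <= (g (S k) - g k) * (B * tail q (S k)))
      by (apply Rmult_le_compat_l; lra).
    lra.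
Qed.

Theorem lemma4p4 :
  exists C : R,
    forall (p : nat -> R) (lam : R),
      (forall n, 0 <= p n) ->
      infinite_sum p 1 ->
      infinite_sum (fun n => INR n * p n) lam ->
      0 < lam ->
      forall g : nat -> R,
        (forall n, 0 <= g n) ->
        (forall m n, (m <= n)%nat -> g m <= g n) ->
        forall k : nat,
          Etrunc p g k <= C * (eta p lam k + 1) * Etrunc (poi lam) g k.
Proof.
  exists 2. intros p lam Hp _ _ Hlam g Hg Hmon k.
  pose proof (eta_nonneg p lam k).
  apply Etrunc_le_of_tail_le; [lra | exact Hg | exact Hmon |].
  intros r Hr. apply tail_le_eta; auto; lia.
Qed.
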